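(* Let $N\ge 2$, $c\in\mathbb{R}$, and consider Jacobi parameters $a_1,\dots,a_{N-1}>0$, $b_1,\dots,b_N\in\mathbb{R}$ with $\sum_{j=1}^N b_j=c$, equipped with the Poisson bracket described in the context. Let $P_n$ be the monic orthogonal polynomials defined in the context. Then for every $1\le n\le N-1$ and every $w\in\mathbb{C}$, \[ \{a_n^2, P_n(w)\} = -\tfrac12\, a_n^2\, P_{n-1}(w). \]
   Context: The Poisson bracket on functions of $(a_1,\dots,a_{N-1},b_1,\dots,b_N)$ is the bilinear antisymmetric bracket satisfying the Leibniz rule whose only nonzero brackets among the coordinates are $\{b_k,a_k\}=-\tfrac14 a_k$ for $k=1,\dots,N-1$ and $\{b_k,a_{k-1}\}=\tfrac14 a_{k-1}$ for $k=2,\dots,N$ (all brackets $\{a_i,a_j\}$, $\{b_i,b_j\}$ and all other $\{b_i,a_j\}$ vanish). Brackets of functions depending on auxiliary complex variables such as $w$ are computed with these variables held fixed. The monic polynomials are defined by $P_{-1}=0$, $P_0=1$, $P_{j+1}(x)=(x-b_{j+1})P_j(x)-a_j^2P_{j-1}(x)$; equivalently $P_n(x)=\det(x-J_n)$ where $J_n$ is the $n\times n$ tridiagonal matrix with diagonal $b_1,\dots,b_n$ and off-diagonal entries $a_1,\dots,a_{n-1}$. *)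

From HB Require Import structures.
From mathcomp Require Import all_boot all_order all_algebra.
From mathcomp Require Import mpoly.
Set Implicit Arguments. Unset Strict Implicit. Unset Printing Implicit Defensive.
Import Order.TTheory GRing.Theory Num.Theory.
Local Open Scope ring_scope.

(* Coordinates (a_1..a_{N-1}, b_1..b_N) are the 2N-1 variables of the
   polynomial ring {mpoly C[(N.-1 + N.-1).+1]}:
     a_k  (1 <= k <= N-1)  is variable number k-1,
     b_k  (1 <= k <= N)    is variable number (N-1) + (k-1).            *)
Section Jacobi.
Variable C : numClosedFieldType.
Variable N : nat.

Definition nvar := (N.-1 + N.-1).+1.
Definition Fun := {mpoly C[nvar]}.

Definition avar (k : nat) : Fun := 'X_(inord k.-1).
Definition bvar (k : nat) : Fun := 'X_(inord (N.-1 + k.-1)).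

(* {a_k, b_m} for 1 <= k <= N-1, 1 <= m <= N, read off from
   {b_k,a_k} = -a_k/4 and {b_{k+1},a_k} = a_k/4, by antisymmetry. *)
Definition brack_ab (k m : nat) : Fun :=
  if m == k then (4%:R : C)^-1 *: avar k
  else if m == k.+1 then - ((4%:R : C)^-1 *: avar k)
  else 0.

Definition pmat (i j : nat) : Fun :=
  if ((i < N.-1) && (N.-1 <= j))%N then brack_ab i.+1 (j - N.-1)%N.+1
  else if ((j < N.-1) && (N.-1 <= i))%N then - brack_ab j.+1 (i - N.-1)%N.+1
  else 0.

(* The unique bilinear, antisymmetric, Leibniz bracket with the given
   coordinate brackets: {f,g} = sum_{i,j} {x_i,x_j} d_i f d_j g. *)
Definition pbracket (f g : Fun) : Fun :=
  \sum_(i < nvar) \sum_(j < nvar) pmat i j * (f^`M(i)) * (g^`M(j)).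

Fixpoint Ppair (w : C) (j : nat) : Fun * Fun :=
  match j with
  | 0 => (0, 1)
  | j'.+1 => let pq := Ppair w j' in
             (pq.2, (w%:MP - bvar j'.+1) * pq.2 - avar j' ^+ 2 * pq.1)
  end.

Definition Ppoly (w : C) (n : nat) : Fun := (Ppair w n).2.

Definition point (a b : nat -> C) (i : 'I_nvar) : C :=
  if ((i : nat) < N.-1)%N then a i.+1 else b (i - N.-1)%N.+1.

End Jacobi.

(* Among the coordinates only b_k and b_{k+1} have a nonzero bracket with a_k,
   so {a_k^2, g} = (a_k^2 / 2) (d g/d b_k - d g/d b_{k+1}) for every g.  By the
   recurrence, P_n does not involve b_{n+1} and is affine in b_n with slope
   -P_{n-1}.  The identity holds already for the polynomials. *)
From HB Require Import structures.
From mathcomp Require Import all_boot all_order all_algebra.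
From mathcomp Require Import mpoly zify ring.
Import Order.TTheory GRing.Theory Num.Theory.
Local Open Scope ring_scope.

Lemma mderiv_mpolyX (R : comNzRingType) n (i j : 'I_n) :
  ('X_i : {mpoly R[n]})^`M(j) = (i == j)%:R.
Proof.
rewrite mderivX mnm1E; case: eqP => [<-|_]; last by rewrite !scale0r.
have -> : (U_(i) - U_(i))%MM = 0%MM by apply/mnmP => k; rewrite mnmBE subnn mnm0E.
by rewrite mpolyX0 scale1r.
Qed.

Section JacobiBracket.
Variables (C : numClosedFieldType) (N : nat).

Local Notation Fun := (Fun C N).
Local Notation avar := (avar C N).
Local Notation bvar := (bvar C N).
Local Notation pmat := (pmat C N).
Local Notation pbracket := (@pbracket C N).

Definition aidx (k : nat) : 'I_(nvar N) := inord k.-1.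
Definition bidx (k : nat) : 'I_(nvar N) := inord (N.-1 + k.-1).

Lemma aidxE k : (k <= N)%N -> aidx k = k.-1 :> nat.
Proof. by move=> hk; rewrite inordK // /nvar; lia. Qed.

Lemma bidxE k : (k <= N)%N -> bidx k = (N.-1 + k.-1)%N :> nat.
Proof. by move=> hk; rewrite inordK // /nvar; lia. Qed.

Lemma mderiv_mpolyX_neq (i j : 'I_(nvar N)) :
  (i : nat) != j -> ('X_i : Fun)^`M(j) = 0.
Proof. by move=> ne_ij; rewrite mderiv_mpolyX -val_eqE (negPf ne_ij). Qed.

Lemma pmat_ab i : (i < N.-1)%N -> pmat i (N.-1 + i) = (4%:R : C)^-1 *: avar i.+1.
Proof.
move=> hi; rewrite /pmat ifT; last by apply/andP; split; lia.
by rewrite /brack_ab addKn eqxx.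
Qed.

Lemma pmat_ab_succ i :
  (i < N.-1)%N -> pmat i (N.-1 + i.+1) = - ((4%:R : C)^-1 *: avar i.+1).
Proof.
move=> hi; rewrite /pmat ifT; last by apply/andP; split; lia.
by rewrite /brack_ab addKn ifF ?eqxx //; apply/eqP; lia.
Qed.

Lemma pmat_a_eq0 i j : (i < N.-1)%N ->
  j != (N.-1 + i)%N -> j != (N.-1 + i.+1)%N -> pmat i j = 0.
Proof.
move=> hi /eqP ne_j /eqP ne_j'; rewrite /pmat.
case: ifP => [/andP[_ hj]|_]; last by rewrite ifF //; apply/negbTE; lia.
by rewrite /brack_ab !ifF //; apply/eqP; lia.
Qed.

Lemma mderiv_avar_sq k (i : 'I_(nvar N)) :
  (avar k ^+ 2)^`M(i) = if aidx k == i then 2%:R * avar k else 0.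
Proof. by rewrite expr2 mderivM mderiv_mpolyX; case: eqP => _ /=; ring. Qed.

Lemma pbracket_avar_sq k g : (0 < k <= N.-1)%N ->
  pbracket (avar k ^+ 2) g
  = ((2%:R : C)^-1 *: avar k ^+ 2) * (g^`M(bidx k) - g^`M(bidx k.+1)).
Proof.
move=> hk.
have ak : aidx k = k.-1 :> nat by rewrite aidxE; lia.
have bk : bidx k = (N.-1 + k.-1)%N :> nat by rewrite bidxE; lia.
have bk1 : bidx k.+1 = (N.-1 + k.-1.+1)%N :> nat by rewrite bidxE; lia.
rewrite /pbracket (bigD1 (aidx k)) //= [X in _ + X]big1 ?addr0; last first.
  move=> i ne_i; apply: big1 => j _.
  by rewrite mderiv_avar_sq eq_sym (negPf ne_i) mulr0 mul0r.
have ne_b : bidx k.+1 != bidx k by rewrite -val_eqE /= bk bk1; lia.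
rewrite (bigD1 (bidx k)) // (bigD1 (bidx k.+1)) //= [X in _ + (_ + X)]big1 ?addr0.
  rewrite mderiv_avar_sq eqxx ak bk bk1 pmat_ab ?pmat_ab_succ; try lia.
  have -> : k.-1.+1 = k by lia.
  have quarter : (4%:R : C)^-1 * 2%:R = (2%:R)^-1.
    by rewrite -[4%:R]/((2 * 2)%N%:R) natrM invfM -mulrA mulVf ?mulr1 // pnatr_eq0.
  by rewrite -!mul_mpolyC -quarter mpolyCM mpolyC_nat; ring.
move=> j /andP[]; rewrite -!val_eqE /= bk bk1 => ne_j ne_j'.
by rewrite ak pmat_a_eq0 ?mul0r //; lia.
Qed.

(* The variables numbered from N.-1 + j on are b_{j+1}, ..., b_N. *)
Lemma mderiv_Ppair_eq0 (w : C) j (i : 'I_(nvar N)) : (N.-1 + j <= i)%N ->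
  ((Ppair N w j).1)^`M(i) = 0 /\ ((Ppair N w j).2)^`M(i) = 0.
Proof.
have hi : (i < (N.-1 + N.-1).+1)%N := ltn_ord i.
elim: j => [|j IH] hij /=; first by rewrite mderiv0 -mpolyC1 mderivC.
have /IH[dQ dP] : (N.-1 + j <= i)%N by lia.
split=> //; rewrite mderivB !mderivM dQ dP mderivB mderivC.
have ne_b : (bidx j.+1 : nat) != i by rewrite bidxE /=; lia.
have ne_a : (aidx j : nat) != i by rewrite aidxE; lia.
by rewrite !mderiv_mpolyX_neq // !(mulr0, mul0r, subr0, addr0).
Qed.

Lemma mderiv_Ppoly_bidx (w : C) n : (0 < n <= N)%N ->
  (Ppoly N w n)^`M(bidx n) = - Ppoly N w n.-1.
Proof.
case: n => [//|m] /= hm.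
have /(mderiv_Ppair_eq0 w)[dQ dP] : (N.-1 + m <= bidx m.+1)%N by rewrite bidxE.
rewrite /Ppoly /= mderivB mderivM dP mulr0 addr0 mderivB mderivC.
have -> : (avar m ^+ 2 * (Ppair N w m).1)^`M(bidx m.+1) = 0.
  case: m hm dQ {dP} => [|m] hm dQ; first by rewrite mulr0 mderiv0.
  rewrite mderivM dQ mderiv_avar_sq mulr0 addr0.
  have -> : (aidx m.+1 == bidx m.+2) = false by rewrite -val_eqE /= aidxE ?bidxE /=; lia.
  by rewrite mul0r.
by rewrite /bvar -/(bidx _) mderiv_mpolyX eqxx sub0r mulN1r subr0.
Qed.

End JacobiBracket.

Theorem lemma2p2 (C : numClosedFieldType) (N : nat) (c : C)
  (a b : nat -> C) :
  (2 <= N)%N ->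
  c \is Num.real ->
  (forall k, (1 <= k <= N.-1)%N -> 0 < a k) ->
  (forall k, (1 <= k <= N)%N -> b k \is Num.real) ->
  \sum_(1 <= j < N.+1) b j = c ->
  forall n, (1 <= n <= N.-1)%N -> forall w : C,
    (@pbracket C N (avar C N n ^+ 2) (Ppoly N w n)).@[@point C N a b]
    = (- ((2%:R : C)^-1 *: (avar C N n ^+ 2 * Ppoly N w n.-1))).@[@point C N a b].
Proof.
move=> _ _ _ _ _ n hn w; congr (_.@[_]).
have hb : (N.-1 + n <= bidx N n.+1)%N by rewrite bidxE; lia.
have [_ dP_succ] := mderiv_Ppair_eq0 C N w n (bidx N n.+1) hb.
rewrite pbracket_avar_sq // mderiv_Ppoly_bidx; last by lia.
by rewrite /Ppoly dP_succ subr0 mulrN -scalerAl.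
Qed.
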